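(* Let $S\subseteq\Sigma^n$ be a double-code and $i\in[n]$. (a) $S$ is complementable if and only if $\backslash_i S$ is a complementable double-code. (b) $S$ is prime if and only if $\backslash_i S$ is a prime double-code.
   Context: Let $\Sigma=\{0,1,2,3\}$, $[n]=\{1,\ldots,n\}$. An $i$-line of $\Sigma^n$ is a set of the four words that agree in all coordinates except the $i$th; a line is an $i$-line for some $i$. A double-code is a set meeting every line in $0$ or $2$ elements; a double-MDS-code is a set meeting every line in exactly $2$ elements; a double-code is complementable if contained in a double-MDS-code, and prime if complementable, nonempty and not partitionable into two or more nonempty double-codes. For $S\subseteq\Sigma^n$ and $i\in[n]$, $\mathcal E_i(S)$ is the union of all $i$-lines that meet $S$, and $\backslash_i S=\mathcal E_i(S)\setminus S$. *)

From mathcomp Require Import all_boot.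
Set Implicit Arguments. Unset Strict Implicit. Unset Printing Implicit Defensive.

(* Sigma = {0,1,2,3} = 'I_4 ; words of length n = {ffun 'I_n -> 'I_4}.
   Coordinates [n] = {1..n} are represented 0-based by 'I_n. *)
Definition word (n : nat) := {ffun 'I_n -> 'I_4}.

Definition iline n (i : 'I_n) (x : word n) : {set word n} :=
  [set y : word n | [forall j : 'I_n, (j != i) ==> (y j == x j)]].

Definition is_line n (L : {set word n}) : Prop :=
  exists (i : 'I_n) (x : word n), L = iline i x.

Definition double_code n (S : {set word n}) : Prop :=
  forall L : {set word n}, is_line L -> #|L :&: S| = 0 \/ #|L :&: S| = 2.

Definition double_MDS_code n (S : {set word n}) : Prop :=
  forall L : {set word n}, is_line L -> #|L :&: S| = 2.

Definition complementable n (S : {set word n}) : Prop :=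
  double_code S /\ exists M : {set word n}, double_MDS_code M /\ S \subset M.

Definition partitionable n (S : {set word n}) : Prop :=
  exists P : {set {set word n}},
    partition P S /\ 2 <= #|P| /\ (forall T, T \in P -> T != set0 /\ double_code T).

Definition prime_dc n (S : {set word n}) : Prop :=
  complementable S /\ S != set0 /\ ~ partitionable S.

(* E_i(S): union of all i-lines meeting S *)
Definition ext n (i : 'I_n) (S : {set word n}) : {set word n} :=
  [set y : word n | [exists x in S, y \in iline i x]].

(* \_i S = E_i(S) \ S *)
Definition bsl n (i : 'I_n) (S : {set word n}) : {set word n} := ext i S :\: S.

From mathcomp Require Import all_boot zify.
Set Implicit Arguments. Unset Strict Implicit. Unset Printing Implicit Defensive.

(* If a double code S lies in a double-MDS code M, every i-line meeting S meets
   M in the same two points, so E_i(S) :&: M = S and \_i S = E_i(S) :\: M lies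
   in the double-MDS code ~: M.  For \_i S to be a double code, note that
   E = E_i(S) is a union of i-lines containing, on every line, both or neither
   point of M; this forces every j-line L (j != i) to meet E and ~: E in 0 or at
   least 2 points, so |L :&: E| is 0, 2 or 4, and removing the 0 or 2 points of
   M leaves 0 or 2.  Since \_i (\_i S) = S for every double code, and \_i maps
   a partition of S into double codes to one of \_i S, both equivalences follow
   from the forward implications. *)

Section Lines.
Variable n : nat.
Implicit Types (i j : 'I_n) (x y z : word n) (L D T X M : {set word n}).

Lemma ilineP i x y : reflect (forall k, k != i -> y k = x k) (y \in iline i x).
Proof.
rewrite inE; apply: (iffP forallP) => [H k ki | H k].
  by apply/eqP; exact: implyP (H k) ki.
by apply/implyP => ki; apply/eqP; apply: H.
Qed.

Lemma iline_refl i x : x \in iline i x.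
Proof. exact/ilineP. Qed.

Lemma iline_sym i x y : y \in iline i x -> x \in iline i y.
Proof. by move/ilineP=> H; apply/ilineP => k /H ->. Qed.

Lemma iline_trans i x y z : y \in iline i x -> z \in iline i y -> z \in iline i x.
Proof. by move=> /ilineP H1 /ilineP H2; apply/ilineP => k ki; rewrite H2 // H1. Qed.

Lemma is_line_iline i x : is_line (iline i x).
Proof. by exists i, x. Qed.

Definition upd x j (a : 'I_4) : word n := [ffun k => if k == j then a else x k].

Lemma upd_at x j a : upd x j a j = a.
Proof. by rewrite ffunE eqxx. Qed.

Lemma upd_in_iline x j a : upd x j a \in iline j x.
Proof. by apply/ilineP => k kj; rewrite ffunE (negbTE kj). Qed.

Lemma card_iline i x : #|iline i x| = 4.
Proof.
have -> : iline i x = [set upd x i a | a in 'I_4].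
  apply/setP => y; apply/idP/imsetP => [/ilineP yx | [a _ ->]]; last exact: upd_in_iline.
  exists (y i) => //; apply/ffunP => k; rewrite ffunE.
  by case: eqP => [-> // | /eqP ki]; rewrite yx.
rewrite card_imset ?card_ord // => a b /(congr1 (fun w : word n => w i)).
by rewrite !upd_at.
Qed.

Lemma card_line L : is_line L -> #|L| = 4.
Proof. by case=> i [x ->]; apply: card_iline. Qed.

Lemma dc_line_card D L : double_code D -> is_line L -> L :&: D != set0 -> #|L :&: D| = 2.
Proof. by move=> dcD /dcD [/eqP | //]; rewrite cards_eq0 => ->. Qed.

Lemma dc_iline_card D i x : double_code D -> x \in D -> #|iline i x :&: D| = 2.
Proof.
move=> dcD xD; apply: dc_line_card (is_line_iline i x) _ => //.
by apply/set0Pn; exists x; rewrite inE iline_refl.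
Qed.

Lemma dc_subset_line T X L : double_code T -> double_code X -> T \subset X ->
  is_line L -> L :&: T = set0 \/ L :&: T = L :&: X.
Proof.
move=> dcT dcX TX lL; have [-> | LT] := eqVneq (L :&: T) set0; [by left | right].
have LTX : L :&: T \subset L :&: X by apply: setIS.
apply/eqP; rewrite eqEcard LTX (dc_line_card dcT) // (dc_line_card dcX) //.
by apply: contraNneq LT => LX0; rewrite -subset0 -LX0.
Qed.

Lemma mds_dc M : double_MDS_code M -> double_code M.
Proof. by move=> mdsM L /mdsM; right. Qed.

Lemma mds_setC M : double_MDS_code M -> double_MDS_code (~: M).
Proof. by move=> mdsM L lL; rewrite -setDE cardsD (card_line lL) (mdsM L lL). Qed.

Lemma mds_iline_card M i x : double_MDS_code M -> #|iline i x :&: M| = 2.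
Proof. by move/(_ _ (is_line_iline i x)). Qed.

End Lines.

Section Extension.
Variables (n : nat) (i : 'I_n).
Implicit Types (x y z : word n) (S T X : {set word n}).

Lemma extP S y : reflect (exists2 x, x \in S & y \in iline i x) (y \in ext i S).
Proof.
rewrite inE; apply: (iffP existsP) => [[x /andP [xS yx]] | [x xS yx]].
  by exists x.
by exists x; rewrite xS.
Qed.

Lemma subset_ext S : S \subset ext i S.
Proof. by apply/subsetP => x xS; apply/extP; exists x => //; apply: iline_refl. Qed.

Lemma ext_iline S y z : z \in iline i y -> (z \in ext i S) = (y \in ext i S).
Proof.
move=> zy; apply/extP/extP => [] [x xS wx]; exists x => //.
  exact: iline_trans wx (iline_sym zy).
exact: iline_trans wx zy.
Qed.

Lemma ext0 : ext i set0 = set0 :> {set word n}.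
Proof.
by apply/setP => y; rewrite in_set0; apply/negbTE/negP => /extP [x]; rewrite in_set0.
Qed.

Lemma ext_bigcup (P : {set {set word n}}) :
  ext i (\bigcup_(T in P) T) = \bigcup_(T in P) ext i T.
Proof.
apply/setP => y; apply/extP/bigcupP => [[x /bigcupP [T TP xT] yx] | [T TP /extP [x xT yx]]].
  by exists T => //; apply/extP; exists x.
by exists x => //; apply/bigcupP; exists T.
Qed.

Section SubCode.
Variables T X : {set word n}.
Hypotheses (dcT : double_code T) (dcX : double_code X) (TX : T \subset X).

(* An i-line meeting [T] meets [X] in the same two points. *)
Lemma extI_subcode : ext i T :&: X = T.
Proof.
apply/setP => y; rewrite inE; apply/andP/idP => [[/extP [x xT yx] yX] | yT].
  case: (dc_subset_line dcT dcX TX (is_line_iline i x)) => [LT0 | LTX].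
    have : x \in iline i x :&: T by rewrite inE iline_refl.
    by rewrite LT0 in_set0.
  have : y \in iline i x :&: T by rewrite LTX inE yx.
  by case/setIP.
by rewrite (subsetP (subset_ext T)) ?(subsetP TX).
Qed.

Lemma mem_ext_subcode y : y \in X -> (y \in ext i T) = (y \in T).
Proof. by move=> yX; rewrite -{2}extI_subcode in_setI yX andbT. Qed.

Lemma bsl_subcode : bsl i T = ext i T :\: X.
Proof. by rewrite /bsl -{2}extI_subcode setDIr setDv set0U. Qed.

End SubCode.

Lemma ext_disjoint X T T' :
  double_code X -> double_code T -> double_code T' -> T \subset X -> T' \subset X ->
  [disjoint T & T'] -> [disjoint ext i T & ext i T'].
Proof.
move=> dcX dcT dcT' TX T'X dis; apply/pred0P => y /=.
apply/negbTE/negP => /andP [/extP [x xT yx] yT'].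
have xT' : x \in T'.
  rewrite -(extI_subcode dcT' dcX T'X) in_setI (subsetP TX x xT) andbT.
  by rewrite -(ext_iline T' yx).
by have := pred0P dis x; rewrite /= xT xT'.
Qed.

Lemma bsl0 : bsl i set0 = set0 :> {set word n}.
Proof. by rewrite /bsl ext0 set0D. Qed.

Lemma bslK S : double_code S -> bsl i (bsl i S) = S.
Proof.
move=> dcS; apply/setP => y; rewrite !in_setD.
case yS: (y \in S); rewrite ?andbF //=.
  have /card_gt0P [z /setDP [zy zS]] : 0 < #|iline i y :\: S|.
    by rewrite cardsD card_iline dc_iline_card.
  apply/extP; exists z; last exact: iline_sym.
  by rewrite in_setD zS (ext_iline _ zy) (subsetP (subset_ext S) y yS).
apply/negP => /andP [yE /extP [z /setDP [zE _] yz]].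
by move: yE; rewrite (ext_iline _ yz) zE.
Qed.

End Extension.

Definition union_of_ilines n (i : 'I_n) (E : {set word n}) :=
  forall y z, z \in iline i y -> (z \in E) = (y \in E).

Definition uniform_on_lines n (M E : {set word n}) :=
  forall L, is_line L -> {in L :&: M &, forall y z, (y \in E) = (z \in E)}.

Section Grid.
Variables (n : nat) (i : 'I_n) (M : {set word n}).
Hypothesis mdsM : double_MDS_code M.
Implicit Types (j : 'I_n) (x : word n) (E : {set word n}).

Lemma union_of_ilinesC E : union_of_ilines i E -> union_of_ilines i (~: E).
Proof. by move=> unionE y z zy; rewrite !inE (unionE y z). Qed.

Lemma uniform_on_linesC E : uniform_on_lines M E -> uniform_on_lines M (~: E).
Proof. by move=> unifE L lL y z yL zL; rewrite !in_setC (unifE L lL y z yL zL). Qed.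

(* If [a] is the only point of the [j]-line in [E], follow the [i]-line of [a]
   to a point [c] of [M], then the [j]-line of [c] to the other point [c'] of [M];
   the [i]-line of [c'] crosses the [j]-line of [a] in a second point of [E]. *)
Lemma card_jline_neq1 E j x : j != i ->
  union_of_ilines i E -> uniform_on_lines M E -> #|iline j x :&: E| != 1.
Proof.
move=> ji unionE unifE; apply/cards1P => -[a LEa].
have /setIP [ax aE] : a \in iline j x :&: E by rewrite LEa set11.
have /card_gt0P [c /setIP [ca cM]] : 0 < #|iline i a :&: M| by rewrite mds_iline_card.
have cL : c \in iline j c :&: M by rewrite in_setI iline_refl.
have /card_gt0P [c' /setD1P [c'c c'L]] : 0 < #|(iline j c :&: M) :\ c|.
  by move: (cardsD1 c (iline j c :&: M)); rewrite mds_iline_card // cL /=; lia.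
have c'E : c' \in E by rewrite -(unifE _ (is_line_iline j c) c c') // (unionE a).
have /setIP [/ilineP c'j _] := c'L; move/ilineP: ca => ca.
pose a' := upd a j (c' j).
have a'E : a' \in E.
  rewrite (unionE c') //; apply/ilineP => k ki; rewrite ffunE.
  by case: eqP => [-> // | /eqP kj]; rewrite c'j // ca.
have : a' \in iline j x :&: E by rewrite in_setI a'E (iline_trans ax) ?upd_in_iline.
rewrite LEa => /set1P /(congr1 (fun w : word n => w j)); rewrite upd_at -ca // => cj.
case/eqP: c'c; apply/ffunP => k.
by case: (eqVneq k j) => [-> // | kj]; rewrite c'j.
Qed.

Lemma card_jline_neq3 E j x : j != i ->
  union_of_ilines i E -> uniform_on_lines M E -> #|iline j x :&: E| != 3.
Proof.
move=> ji unionE unifE.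
have := card_jline_neq1 x ji (union_of_ilinesC unionE) (uniform_on_linesC unifE).
by rewrite -setDE; move: (cardsID E (iline j x)); rewrite card_iline; lia.
Qed.

Lemma double_code_setIC E :
  union_of_ilines i E -> uniform_on_lines M E -> double_code (E :&: ~: M).
Proof.
move=> unionE unifE L [j [x ->]]; rewrite setIA.
have LM := mds_iline_card j x mdsM.
have LCM : #|iline j x :&: E :&: ~: M| <= #|iline j x :&: ~: M|.
  exact/subset_leq_card/setSI/subsetIl.
have [-> | ji] := eqVneq j i.
  have [xE | xE] := boolP (x \in E).
    have -> : iline i x :&: E = iline i x.
      by apply/setIidPl/subsetP => y yx; rewrite (unionE x y yx).
    by right; rewrite (mds_iline_card i x (mds_setC mdsM)).
  have -> : iline i x :&: E = set0.
    apply/setP => y; rewrite in_set0 in_setI; apply/negbTE/andP => -[yx].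
    by rewrite (unionE x y yx); apply/negP.
  by left; rewrite set0I cards0.
have LEM : #|iline j x :&: E :&: M| = 0 \/ #|iline j x :&: E :&: M| = 2.
  have [-> | [y /setIP [/setIP [yx yE] yM]]] := set_0Vmem (iline j x :&: E :&: M).
    by left; rewrite cards0.
  right; suff -> : iline j x :&: E :&: M = iline j x :&: M by [].
  apply/setP => z; rewrite -setIA [E :&: M]setIC setIA in_setI andb_idr // => zL.
  by rewrite -(unifE _ (is_line_iline j x) y z) // in_setI yx.
rewrite (mds_iline_card j x (mds_setC mdsM)) in LCM.
have := cardsID M (iline j x :&: E); rewrite setDE.
have := card_jline_neq1 x ji unionE unifE; have := card_jline_neq3 x ji unionE unifE.
have : #|iline j x :&: E| <= 4.
  by apply: leq_trans (subset_leq_card (subsetIl _ E)) _; rewrite card_iline.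
lia.
Qed.

End Grid.

Section Complementable.
Variables (n : nat) (i : 'I_n).
Implicit Types S X M : {set word n}.

Lemma uniform_on_lines_ext S M : double_code S -> double_MDS_code M -> S \subset M ->
  uniform_on_lines M (ext i S).
Proof.
move=> dcS mdsM SM L lL y z /setIP [yL yM] /setIP [zL zM].
rewrite !(mem_ext_subcode i dcS (mds_dc mdsM) SM) //.
case: (dc_subset_line dcS (mds_dc mdsM) SM lL) => /setP LS.
  by move: (LS y) (LS z); rewrite !in_setI !in_set0 yL zL /= => -> ->.
by move: (LS y) (LS z); rewrite !in_setI yL zL yM zM /= => -> ->.
Qed.

Lemma complementable_bsl S : complementable S -> complementable (bsl i S).
Proof.
case=> dcS [M [mdsM SM]]; rewrite (bsl_subcode i dcS (mds_dc mdsM) SM) setDE.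
split; last by exists (~: M); split; [exact: mds_setC | exact: subsetIr].
exact: (double_code_setIC (i:=i) mdsM (@ext_iline n i S))
                          (uniform_on_lines_ext dcS mdsM SM).
Qed.

Lemma bsl_eq0 S : double_code S -> (bsl i S == set0) = (S == set0).
Proof.
by move=> dcS; apply/eqP/eqP => [S0 | ->]; [rewrite -(bslK i dcS) S0 |]; rewrite bsl0.
Qed.

Lemma partitionable_bsl X : complementable X -> partitionable X -> partitionable (bsl i X).
Proof.
case=> dcX [M [mdsM XM]] [P [/and3P [/eqP coverP trivP _] [cardP memP]]].
have subX T : T \in P -> T \subset X by move=> TP; rewrite -coverP (bigcup_sup T TP).
have dcP T : T \in P -> double_code T by case/memP.
have complP T : T \in P -> complementable T.
  move=> TP; split; first exact: dcP.
  by exists M; split; last exact: subset_trans (subX T TP) XM.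
have bslP T : T \in P -> bsl i T = ext i T :\: X.
  by move=> TP; rewrite (bsl_subcode i (dcP T TP) dcX (subX T TP)).
have bsl_neq0 T : T \in P -> bsl i T != set0.
  by move=> TP; rewrite bsl_eq0 ?dcP //; case: (memP T TP).
exists (bsl i @: P); split; [apply/and3P; split | split].
- rewrite cover_imset; apply/eqP/setP => y.
  rewrite [RHS]in_setD -[X in ext i X]coverP ext_bigcup.
  apply/bigcupP/andP => [[T TP] | [yX /bigcupP [T TP yT]]].
    by rewrite bslP // in_setD => /andP [yX yT]; split => //; apply/bigcupP; exists T.
  by exists T => //; rewrite bslP // in_setD yX.
- apply/trivIsetP => _ _ /imsetP [T TP ->] /imsetP [T' T'P ->] neq.
  have TT' : T != T' by apply: contraNneq neq => ->.
  have := elimT trivIsetP trivP T T' TP T'P TT'.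
  move/(ext_disjoint i dcX (dcP T TP) (dcP T' T'P) (subX T TP) (subX T' T'P)).
  exact/disjointW/subsetDl/subsetDl.
- by apply/imsetP => -[T TP /eqP]; rewrite eq_sym (negbTE (bsl_neq0 T TP)).
- rewrite card_in_imset // => T T' TP T'P eqTT'.
  by rewrite -(bslK i (dcP T TP)) eqTT' (bslK i (dcP T' T'P)).
- move=> _ /imsetP [T TP ->]; split; first exact: bsl_neq0.
  by case: (complementable_bsl (complP T TP)).
Qed.

Lemma prime_dc_bsl S : prime_dc S -> prime_dc (bsl i S).
Proof.
case=> cS [S0 npS]; have dcS := cS.1; split; first exact: complementable_bsl.
split; first by rewrite bsl_eq0.
by move/(partitionable_bsl (complementable_bsl cS)); rewrite bslK.
Qed.

End Complementable.

Theorem proposition6 (n : nat) (S : {set word n}) (i : 'I_n) :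
  double_code S ->
  (complementable S <-> (double_code (bsl i S) /\ complementable (bsl i S))) /\
  (prime_dc S <-> (double_code (bsl i S) /\ prime_dc (bsl i S))).
Proof.
move=> dcS; split; split.
- by move/(complementable_bsl i) => cb; split => //; case: cb.
- by case=> _ /(complementable_bsl i); rewrite bslK.
- by move/(prime_dc_bsl i) => pb; split => //; case: pb => -[].
- by case=> _ /(prime_dc_bsl i); rewrite bslK.
Qed.
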